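(* Let $n$ be sufficiently large and let $K_{2n+1}$ be ND-coloured. Let $x,y\in V(K_{2n+1})$ be distinct vertices, let $c_1,c_2\in C(K_{2n+1})$ be distinct colours, and let $X\subseteq V(K_{2n+1})$ and $C\subseteq C(K_{2n+1})$ satisfy $|X|\leq n/25$ and $|C|\leq n/25$. Then there is a set $C'\subseteq C(K_{2n+1})\setminus (C\cup\{c_1,c_2\})$ with $|C'|=6$ such that, for each $i\in \{1,2\}$, there is a $(C'\cup\{c_i\})$-rainbow $x,y$-path of length 7 all of whose interior vertices lie in $V(K_{2n+1})\setminus X$.
   Context: ND-colouring of $K_{2n+1}$: vertex set $\{0,\dots,2n\}$, edge $ij$ has colour $k\in\{1,\dots,n\}$ where $i-j\equiv\pm k\pmod{2n+1}$; $C(K_{2n+1})=\{1,\dots,n\}$. A graph is $D$-rainbow if its edges have distinct colours all in $D$. Length of a path is its number of edges. *)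

From mathcomp Require Import all_boot.
Set Implicit Arguments. Unset Strict Implicit. Unset Printing Implicit Defensive.

(* Vertices of K_{2n+1}: 'I_(2n+1), i.e. {0,...,2n}.  Colours: naturals 1..n. *)
Notation vert n := 'I_(n.*2.+1).

(* ND-colouring: colour of edge ij is the k in {1..n} with i - j = +-k mod 2n+1 *)
Definition ndcol (n : nat) (i j : vert n) : nat :=
  let d := (i + n.*2.+1 - j) %% n.*2.+1 in
  if d <= n then d else n.*2.+1 - d.

Definition is_colour (n c : nat) : bool := (0 < c) && (c <= n).

(* A path is given by its start vertex x and the remaining vertices s
   (so the vertex sequence is x :: s, its length is size s). *)
Definition xy_path n (x y : vert n) (s : seq (vert n)) : bool :=
  uniq (x :: s) && (last x s == y).

Definition path_cols n (x : vert n) (s : seq (vert n)) : seq nat :=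
  pairmap (@ndcol n) x s.

Definition rainbow n (D : seq nat) (x : vert n) (s : seq (vert n)) : bool :=
  uniq (path_cols x s) && all (fun c => c \in D) (path_cols x s).

Definition interior n (x : vert n) (s : seq (vert n)) : seq (vert n) :=
  take (size s).-1 s.

From mathcomp Require Import all_boot all_algebra zify.
Import GRing.Theory.
Set Implicit Arguments. Unset Strict Implicit. Unset Printing Implicit Defensive.

(* Identify the vertices with Z/(2n+1), so that the colour of the edge ab is
   the class of a - b up to sign.  Both paths are walks from x whose steps
   are, up to sign and order, c_i and the six linear forms
     t,  u,  t + u + h,  w,  z,  w + z + x - y + c2 + h      (2h = c1 - c2)
   in four free parameters z, w, u, t; in both cases the steps add up to
   y - x, and C' is the set of colours of the six forms.  Apart from x <> y
   and c_i <> 0, each requirement (distinct vertices, distinct colours in C',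
   C' disjoint from C u {c1, c2}, interior vertices outside X) asks a linear
   form to avoid a small set, and each such form has a parameter with
   coefficient +-1 or +-2, which is invertible modulo 2n+1.  Fixing the
   parameters one at a time, a form rules out at most as many values of the
   last of its parameters to be fixed as its forbidden set has elements, and
   fewer than 2n+1 values are ruled out in total. *)

Section Pairs.
Variable T : Type.

Fixpoint pairs (s : seq T) : seq (T * T) :=
  if s is a :: s' then [seq (a, b) | b <- s'] ++ pairs s' else [::].

Lemma pairwise_pairs (r : rel T) s : pairwise r s = all (fun p => r p.1 p.2) (pairs s).
Proof. by elim: s => //= a s ->; rewrite all_cat all_map. Qed.

Lemma uniq_map_pairs (U : eqType) (h : T -> U) s :
  all (fun p => h p.1 != h p.2) (pairs s) -> uniq (map h s).
Proof. by rewrite uniq_pairwise pairwise_map pairwise_pairs. Qed.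

End Pairs.

Section AvoidPreimages.
Variable T : finType.

Lemma card_bigcup_seq_le I (r : seq I) (F : I -> {set T}) :
  #|\bigcup_(i <- r) F i| <= \sum_(i <- r) #|F i|.
Proof.
elim/big_ind2: _ => [|m A k B leA leB|//]; first by rewrite cards0.
exact: leq_trans (leq_card_setU A B).1 (leq_add leA leB).
Qed.

Lemma exists_avoid_preimages (I : eqType) (r : seq I) (f : I -> T -> T) (A : I -> {set T}) :
  {in r, forall i, injective (f i)} -> \sum_(i <- r) #|A i| < #|T| ->
  exists p, {in r, forall i, f i p \notin A i}.
Proof.
move=> inj small; pose B := \bigcup_(i <- r) f i @^-1: A i.
have /set0Pn[p] : ~: B != set0.
  rewrite -card_gt0 -(ltn_add2l #|B|) addn0 cardsC.
  apply: leq_ltn_trans (card_bigcup_seq_le _ _) (leq_ltn_trans _ small).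
  by rewrite big_seq [X in _ <= X]big_seq; apply: leq_sum => i /inj/card_preimset->.
rewrite inE => pB; exists p => i ir; apply: contra pB => fip.
by rewrite /B (big_rem i) //= in_setU inE fip.
Qed.

End AvoidPreimages.

Section LinearCombinations.
Variable V : zmodType.
Local Open Scope ring_scope.

Fixpoint seq_add (a b : seq int) : seq int :=
  match a, b with
  | i :: a', j :: b' => i + j :: seq_add a' b'
  | [::], _ => b
  | _, [::] => a
  end.

Definition lead (ks : seq int) : int := nth 0 ks (find (fun k => k != 0) ks).

Lemma lead_behead ks : head 0 ks = 0 -> lead (behead ks) = lead ks.
Proof. by case: ks => //= k ks ->. Qed.

Lemma lead_head ks : head 0 ks != 0 -> lead ks = head 0 ks.
Proof. by case: ks => //= k ks; rewrite /lead /= => ->. Qed.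

Fixpoint lincomb (ks : seq int) (ps : seq V) : V :=
  if ks is k :: ks' then head 0 ps *~ k + lincomb ks' (behead ps) else 0.

Lemma lincomb_cons ks p ps :
  lincomb ks (p :: ps) = p *~ head 0 ks + lincomb (behead ks) ps.
Proof. by case: ks => [|k ks] /=; rewrite ?mulr0z ?addr0. Qed.

Lemma lincombD ks ls ps : lincomb (seq_add ks ls) ps = lincomb ks ps + lincomb ls ps.
Proof.
elim: ks ls ps => [|k ks IH] [|l ls] ps /=; rewrite ?add0r ?addr0 //.
by rewrite IH mulrzDr addrACA.
Qed.

Lemma lincombN ks ps : lincomb (map -%R ks) ps = - lincomb ks ps.
Proof. by elim: ks ps => [|k ks IH] ps /=; rewrite ?oppr0 // IH mulrNz opprD. Qed.

End LinearCombinations.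

Section LinearAvoidance.
Variable V : finZmodType.
Local Open Scope ring_scope.
Local Notation constraint := (seq int * V * {set V})%type.

Lemma sum_card_filter_lt (L : seq constraint) (P : pred constraint) :
  (\sum_(it <- L) #|it.2| < #|V|)%N -> (\sum_(it <- L | P it) #|it.2| < #|V|)%N.
Proof. by apply: leq_ltn_trans; apply: (sub_le_big leqnn (fun m n => leq_addr n m)). Qed.

Lemma extend_lincomb_avoid (L : seq constraint) (ps : seq V) :
  {in L, forall it : constraint, injective (fun z : V => z *~ lead it.1.1)} ->
  (\sum_(it <- L) #|it.2| < #|V|)%N ->
  {in L, forall it : constraint,
     head 0 it.1.1 = 0 -> lincomb (behead it.1.1) ps + it.1.2 \notin it.2} ->
  exists p, {in L, forall it : constraint, lincomb it.1.1 (p :: ps) + it.1.2 \notin it.2}.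
Proof.
move=> inj small tail_ok.
pose f (it : constraint) p := p *~ head 0 it.1.1 + (lincomb (behead it.1.1) ps + it.1.2).
have [p head_ok] :
    exists p, {in [seq it <- L | head 0 it.1.1 != 0], forall it, f it p \notin it.2}.
  apply: exists_avoid_preimages; last by rewrite big_filter; apply: sum_card_filter_lt.
  move=> [[ks c] A]; rewrite mem_filter => /andP[k0 itL] a b /addIr.
  by rewrite -(lead_head k0); apply: (inj _ itL).
exists p => -[[ks c] A] itL; rewrite lincomb_cons /=.
have [k0|k0] := eqVneq (head 0 ks) 0.
  by rewrite k0 mulr0z add0r; apply: (tail_ok (ks, c, A)).
by rewrite -addrA; apply: (head_ok (ks, c, A)); rewrite mem_filter k0.
Qed.

(* The parameters are fixed from the last one to the first, so the leading
   coefficient of a form is that of the last of its parameters to be fixed. *)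
Lemma exists_lincomb_avoid (L : seq constraint) :
  {in L, forall it : constraint, injective (fun z : V => z *~ lead it.1.1)} ->
  (\sum_(it <- L) #|it.2| < #|V|)%N ->
  exists ps, {in L, forall it : constraint, lincomb it.1.1 ps + it.1.2 \notin it.2}.
Proof.
move=> inj small.
have [m sizeL] : exists m, all (fun it => size it.1.1 <= m)%N L.
  by exists (\max_(it <- L) size it.1.1)%N; apply/allP => it itL; apply: leq_bigmax_seq.
elim: m L inj small sizeL => [|m IHm] L inj small sizeL.
  (* With no parameter left, injectivity of [*~ 0] forces [V] to be trivial,
     so every forbidden set is empty. *)
  exists [::] => -[[ks c] A] itL /=.
  have ks0 : ks = [::] by apply/nilP; move/allP: sizeL => /(_ _ itL) /=; rewrite leqn0.
  have V1 : (#|V| <= #|{: unit}|)%N.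
    by apply: (leq_card (fun=> tt)) => a b _; apply: (inj _ itL); rewrite ks0 /= !mulr0z.
  move: (leq_trans small V1); rewrite card_unit (big_rem _ itL) /= ltnS leqn0.
  by rewrite addn_eq0 => /andP[/eqP/cards0_eq-> _]; rewrite inE.
pose L0 := [seq (behead it.1.1, it.1.2, it.2) | it <- L & head 0 it.1.1 == 0].
have [ps L0ok] :
    exists ps, {in L0, forall it : constraint, lincomb it.1.1 ps + it.1.2 \notin it.2}.
  apply: IHm.
  - move=> it /mapP[[[ks c] A]]; rewrite mem_filter => /andP[/eqP k0 itL] -> /=.
    by rewrite lead_behead //; apply: (inj _ itL).
  - by rewrite big_map big_filter; apply: sum_card_filter_lt.
  - rewrite all_map all_filter; apply/allP => -[[ks c] A] itL /=.
    by apply/implyP => _; move/allP: sizeL => /(_ _ itL) /=; rewrite size_behead; lia.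
have [|p ok] := @extend_lincomb_avoid L ps inj small.
  move=> it itL k0; apply: (L0ok (behead it.1.1, it.1.2, it.2)).
  by apply: map_f; rewrite mem_filter k0 eqxx.
by exists (p :: ps).
Qed.

End LinearAvoidance.

Section CyclicColours.
Variable n : nat.
Local Notation V := 'I_(n.*2.+1).
Local Open Scope ring_scope.

Definition zcol (z : V) : nat :=
  if (z <= n)%N then nat_of_ord z else (n.*2.+1 - z)%N.

Lemma ndcolE (a b : V) : ndcol a b = zcol (a - b).
Proof. by rewrite /ndcol /zcol /= modnDmr addnBA // ltnW. Qed.

Lemma val_oppZp (z : V) :
  nat_of_ord (- z) = if nat_of_ord z == 0%N then 0%N else (n.*2.+1 - z)%N.
Proof.
rewrite /= ; case: eqP => [->|z0]; first by rewrite subn0 modnn.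
by rewrite modn_small //; have := ltn_ord z; lia.
Qed.

Lemma zcolN (z : V) : zcol (- z) = zcol z.
Proof.
rewrite /zcol val_oppZp; case: eqP => [->|] //=.
by have := ltn_ord z; case: ifP; case: ifP; lia.
Qed.

Lemma zcol_le (z : V) : (zcol z <= n)%N.
Proof. by rewrite /zcol; have := ltn_ord z; case: ifP; lia. Qed.

Lemma zcol_eq0 (z : V) : (zcol z == 0%N) = (z == 0).
Proof.
rewrite /zcol -(inj_eq val_inj) /=; have := ltn_ord z.
by case: ifP; lia.
Qed.

Lemma is_colour_zcol (z : V) : is_colour n (zcol z) = (z != 0).
Proof. by rewrite /is_colour zcol_le andbT lt0n zcol_eq0. Qed.

Lemma zcol_inZp c : (c <= n)%N -> zcol (inZp c) = c.
Proof. by move=> cn; rewrite /zcol /= modn_small ?cn //; lia. Qed.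

Lemma zcol_inj (z w : V) : zcol z = zcol w -> z = w \/ z = - w.
Proof.
move=> zw; have := ltn_ord z; have := ltn_ord w.
case: (eqVneq (nat_of_ord w) 0%N) => w0 lw lz.
  by left; apply: ord_inj; move: zw; rewrite /zcol w0 leq0n; case: ifP; lia.
move: zw; rewrite /zcol; case: ifP => zn; case: ifP => wn zw.
- by left; apply: ord_inj.
- by right; apply: ord_inj; rewrite val_oppZp (negbTE w0); lia.
- by right; apply: ord_inj; rewrite val_oppZp (negbTE w0); lia.
- by left; apply: ord_inj; lia.
Qed.

Lemma zcol_neq (a b : V) : a - b != 0 -> a + b != 0 -> zcol a != zcol b.
Proof.
move=> ab_ne ab_nN; apply/eqP => /zcol_inj[ab|ab].
  by move: ab_ne; rewrite ab subrr eqxx.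
by move: ab_nN; rewrite ab addNr eqxx.
Qed.

Lemma card_zcol_preimset (S : seq nat) :
  (#|[set z : V | zcol z \in S]| <= 2 * size (undup S))%N.
Proof.
have zS : [set z : V | zcol z \in S] \subset \bigcup_(c <- undup S) [set inZp c; - inZp c].
  apply/subsetP => z; rewrite inE -mem_undup => zcolS.
  rewrite (big_rem _ zcolS) /= in_setU !inE.
  by case/zcol_inj: (esym (zcol_inZp (zcol_le z))) => /eqP->; rewrite ?orbT.
apply: leq_trans (subset_leq_card zS) (leq_trans (card_bigcup_seq_le _ _) _).
elim: (undup S) => [|c s IH]; first by rewrite big_nil.
by rewrite big_cons mulnS leq_add // cards2; case: (_ != _).
Qed.

Definition zhalf (z : V) : V := z *+ n.+1.

Lemma mulrn_order (z : V) : z *+ n.*2.+1 = 0.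
Proof. by apply: val_inj; rewrite Zp_mulrn /= modnMl. Qed.

Lemma zhalfK : cancel (fun z : V => z *+ 2) zhalf.
Proof.
move=> z; rewrite /zhalf -mulrnA.
by rewrite (_ : (2 * n.+1 = n.*2.+1 + 1)%N) ?mulrnDr ?mulrn_order ?add0r //; lia.
Qed.

Lemma zhalfKr (z : V) : zhalf z *+ 2 = z.
Proof. by rewrite /zhalf -mulrnA mulnC mulrnA; apply: zhalfK. Qed.

Lemma mulrz_inj k : k \in [:: 1; -1; 2; -2] -> injective (fun z : V => z *~ k).
Proof.
rewrite !inE => /or4P[]/eqP-> a b /=; rewrite ?mulr1z ?mulrN1z ?mulrNz //.
- exact: oppr_inj.
- exact: (can_inj zhalfK).
- by move/oppr_inj; apply: (can_inj zhalfK).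
Qed.

Lemma path_cols_scanl (x : V) (ds : seq V) :
  path_cols x (scanl +%R x ds) = map zcol ds.
Proof.
rewrite /path_cols; elim: ds x => //= d ds IH x.
by rewrite IH ndcolE opprD addNKr zcolN.
Qed.

Lemma rainbow_scanl (x : V) (ds : seq V) (D : seq nat) :
  perm_eq (map zcol ds) D -> uniq D -> rainbow D x (scanl +%R x ds).
Proof.
move=> dsD uD; rewrite /rainbow path_cols_scanl (perm_uniq dsD) uD /=.
by apply/allP => c; rewrite (perm_mem dsD).
Qed.

End CyclicColours.

(* A linear form is a pair of coefficient lists: on the parameters
   [z; w; u; t] and on the constants [x; y; c2; h], where 2h = c1 - c2. *)
Definition lform := (seq int * seq int)%type.

Section LinearForms.
Local Open Scope ring_scope.

Definition fadd (f g : lform) : lform := (seq_add f.1 g.1, seq_add f.2 g.2).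
Definition fneg (f : lform) : lform := (map -%R f.1, map -%R f.2).
Definition fsub (f g : lform) : lform := fadd f (fneg g).

Definition lead_unit (f : lform) : bool := lead f.1 \in [:: 1; -1; 2; -2].
Definition unsign (f : lform) : lform := if lead f.1 < 0 then fneg f else f.

Section Evaluation.
Variables (V : zmodType) (ps cs : seq V).

Definition eval (f : lform) : V := lincomb f.1 ps + lincomb f.2 cs.

Lemma evalD f g : eval (fadd f g) = eval f + eval g.
Proof. by rewrite /eval !lincombD addrACA. Qed.

Lemma evalN f : eval (fneg f) = - eval f.
Proof. by rewrite /eval !lincombN opprD. Qed.

Lemma evalB f g : eval (fsub f g) = eval f - eval g.
Proof. by rewrite evalD evalN. Qed.

Lemma eval_scanl a l : map eval (scanl fadd a l) = scanl +%R (eval a) (map eval l).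
Proof. by elim: l a => //= f l IH a; rewrite IH evalD. Qed.

End Evaluation.

Section CyclicEvaluation.
Variables (n : nat) (cs : seq 'I_(n.*2.+1)).

Lemma zcol_eval_unsign ps f : zcol (eval ps cs (unsign f)) = zcol (eval ps cs f).
Proof. by rewrite /unsign; case: ifP => // _; rewrite evalN zcolN. Qed.

Lemma exists_eval_avoid (F : seq (lform * {set 'I_(n.*2.+1)})) :
  {in F, forall it : lform * {set 'I_(n.*2.+1)}, lead_unit it.1} ->
  (\sum_(it <- F) #|it.2| < n.*2.+1)%N ->
  exists ps, {in F, forall it : lform * {set 'I_(n.*2.+1)}, eval ps cs it.1 \notin it.2}.
Proof.
move=> lu small; pose L := [seq (it.1.1, lincomb it.1.2 cs, it.2) | it <- F].
have injL it : it \in L -> injective (fun z : 'I_(n.*2.+1) => z *~ lead it.1.1).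
  by case/mapP=> it' itF ->; apply/mulrz_inj/lu.
have [|ps ok] := exists_lincomb_avoid injL; first by rewrite big_map card_ord.
by exists ps => it itF; apply: (ok _ (map_f _ itF)).
Qed.

End CyclicEvaluation.

Definition zero4 : seq int := [:: 0; 0; 0; 0].
Definition fX : lform := (zero4, [:: 1; 0; 0; 0]).
Definition fY : lform := (zero4, [:: 0; 1; 0; 0]).
Definition fC1 : lform := (zero4, [:: 0; 0; 1; 2]).
Definition fC2 : lform := (zero4, [:: 0; 0; 1; 0]).
Definition fZ : lform := ([:: 1; 0; 0; 0], zero4).
Definition fW : lform := ([:: 0; 1; 0; 0], zero4).
Definition fU : lform := ([:: 0; 0; 1; 0], zero4).
Definition fT : lform := ([:: 0; 0; 0; 1], zero4).
Definition fTU : lform := ([:: 0; 0; 1; 1], [:: 0; 0; 0; 1]).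
Definition fWZ : lform := ([:: 1; 1; 0; 0], [:: 1; -1; 1; 1]).

Definition colour_forms : seq lform := [:: fT; fU; fTU; fW; fZ; fWZ].
Definition steps1 : seq lform := [:: fT; fW; fU; fC1; fZ; fneg fTU; fneg fWZ].
Definition steps2 : seq lform := [:: fneg fT; fW; fneg fU; fC2; fZ; fTU; fneg fWZ].

Definition walk (steps : seq lform) : seq lform := scanl fadd fX steps.
Definition vertex_diffs (steps : seq lform) : seq lform :=
  [seq fsub p.1 p.2 | p <- pairs (fX :: walk steps)].
Definition colour_sums : seq lform :=
  [seq fsub p.1 p.2 | p <- pairs colour_forms] ++
  [seq fadd p.1 p.2 | p <- pairs colour_forms].
Definition distinctness_forms : seq lform :=
  vertex_diffs steps1 ++ vertex_diffs steps2 ++ colour_sums.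
Definition nonzero_forms : seq lform := [seq f <- distinctness_forms | lead_unit f].
Definition interior_forms : seq lform := take 6 (walk steps1) ++ take 6 (walk steps2).
Definition walk_specs : seq (seq lform * lform) := [:: (steps1, fC1); (steps2, fC2)].

Lemma size_nonzero_forms : size nonzero_forms = 82%N.
Proof. by vm_compute. Qed.

Lemma lead_unit_forms : all lead_unit (interior_forms ++ colour_forms).
Proof. by vm_compute. Qed.

Lemma distinctness_forms_cases :
  all (fun f => lead_unit f || (f \in [:: fsub fX fY; fneg fC1; fneg fC2]))
      distinctness_forms.
Proof. by vm_compute. Qed.

Lemma walk_specs_ok :
  all (fun sp => [&& size sp.1 == 7%N, last fX (walk sp.1) == fY
                   & perm_eq (map unsign sp.1) (sp.2 :: colour_forms)]) walk_specs.
Proof. by vm_compute. Qed.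

End LinearForms.

Section Construction.
Variables (n : nat) (x y : 'I_(n.*2.+1)) (c1 c2 : nat).
Variables (X : {set 'I_(n.*2.+1)}) (C : seq nat).
Local Notation V := 'I_(n.*2.+1).
Local Open Scope ring_scope.

Let c1z : V := inZp c1.
Let c2z : V := inZp c2.
Let cs : seq V := [:: x; y; c2z; zhalf (c1z - c2z)].

Definition forbidden_diffs : {set V} := [set z | zcol z \in [:: 0, c1, c2 & C]%N].

Lemma card_forbidden_diffs : (#|forbidden_diffs| <= 2 * (size (undup C)).+3)%N.
Proof.
have undup_cons (a : nat) s : (size (undup (a :: s)) <= (size (undup s)).+1)%N.
  by rewrite /=; case: ifP => // _; apply: leqW.
apply: leq_trans (card_zcol_preimset n _) _; rewrite leq_mul2l; apply/orP; right.
apply: leq_trans (undup_cons _ _) _; rewrite ltnS.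
by apply: leq_trans (undup_cons _ _) _; rewrite ltnS undup_cons.
Qed.

Definition good_params (ps : seq V) : Prop :=
  [/\ {in nonzero_forms, forall f, eval ps cs f != 0},
      {in interior_forms, forall f, eval ps cs f \notin X} &
      {in colour_forms, forall f, eval ps cs f \notin forbidden_diffs}].

(* 82 forms must be nonzero, 12 interior vertices must avoid X, and 6 colour
   forms must avoid at most 2 (|C| + 3) values each. *)
Lemma exists_good_params :
  (118 + 12 * #|X| + 12 * size (undup C) < n.*2.+1)%N -> exists ps, good_params ps.
Proof.
move=> small.
pose F := [seq (f, [set 0 : V]) | f <- nonzero_forms] ++ [seq (f, X) | f <- interior_forms]
          ++ [seq (f, forbidden_diffs) | f <- colour_forms].
have [||ps psF] := @exists_eval_avoid n cs F.
- have /allP lu := lead_unit_forms.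
  move=> it; rewrite !mem_cat => /or3P[]/mapP[f fin ->] /=.
  + by move: fin; rewrite mem_filter => /andP[].
  + by apply: lu; rewrite mem_cat fin.
  + by apply: lu; rewrite mem_cat fin orbT.
- have sum_const (s : seq lform) (A : {set V}) :
      \sum_(it <- [seq (f, A) | f <- s]) #|it.2| = (size s * #|A|)%N.
    rewrite big_map (eq_bigr (fun=> #|A|)) //.
    by rewrite big_const_seq count_predT iter_addn_0 mulnC.
  rewrite !big_cat !sum_const cards1 size_nonzero_forms /=.
  by move: card_forbidden_diffs small; set b := #|forbidden_diffs|; set nX := #|X|; lia.
exists ps; split=> f fin.
- have := psF (f, [set 0]); rewrite in_set1; apply.
  by rewrite mem_cat (map_f (fun f => (f, [set 0])) fin).
- by apply: (psF (f, X)); rewrite !mem_cat (map_f (fun f => (f, X)) fin) orbT.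
- apply: (psF (f, forbidden_diffs)).
  by rewrite !mem_cat (map_f (fun f => (f, forbidden_diffs)) fin) !orbT.
Qed.

Lemma eval_fX ps : eval ps cs fX = x.
Proof. by rewrite /eval /= !mulr0z !mulr1z !add0r !addr0. Qed.

Lemma eval_fY ps : eval ps cs fY = y.
Proof. by rewrite /eval /= !mulr0z !mulr1z !add0r !addr0. Qed.

Lemma eval_fC1 ps : eval ps cs fC1 = c1z.
Proof. by rewrite /eval /= !mulr0z !mulr1z !add0r !addr0 [_ *~ 2]zhalfKr addrC subrK. Qed.

Lemma eval_fC2 ps : eval ps cs fC2 = c2z.
Proof. by rewrite /eval /= !mulr0z !mulr1z !add0r !addr0. Qed.

Section GoodParams.
Variable ps : seq V.
Hypothesis good : good_params ps.
Hypotheses (xy : x != y) (c1col : is_colour n c1) (c2col : is_colour n c2).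

Definition colours : seq nat := [seq zcol (eval ps cs f) | f <- colour_forms].

Lemma zcol_eval_fC1 : zcol (eval ps cs fC1) = c1.
Proof. by rewrite eval_fC1 zcol_inZp //; case/andP: c1col. Qed.

Lemma zcol_eval_fC2 : zcol (eval ps cs fC2) = c2.
Proof. by rewrite eval_fC2 zcol_inZp //; case/andP: c2col. Qed.

Lemma eval_distinctness_neq0 : {in distinctness_forms, forall f, eval ps cs f != 0}.
Proof.
have inZp_neq0 c : is_colour n c -> (inZp c : V) != 0.
  by case/andP=> c0 cn; rewrite -zcol_eq0 zcol_inZp // -lt0n.
move=> f fD; have /allP/(_ f fD)/orP[lu|] := distinctness_forms_cases.
  by case: good => nz _ _; apply: nz; rewrite mem_filter lu.
rewrite !inE => /or3P[]/eqP->.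
- by rewrite evalB eval_fX eval_fY subr_eq0.
- by rewrite evalN eval_fC1 oppr_eq0 inZp_neq0.
- by rewrite evalN eval_fC2 oppr_eq0 inZp_neq0.
Qed.

Lemma colours_spec :
  [/\ uniq colours, all (is_colour n) colours &
      all (fun c => (c \notin C) && (c != c1) && (c != c2)) colours].
Proof.
have bad f : f \in colour_forms -> zcol (eval ps cs f) \notin [:: 0, c1, c2 & C]%N.
  by case: good => _ _ cb /cb; rewrite inE.
split.
- apply: uniq_map_pairs; apply/allP => p pP; apply: zcol_neq; rewrite -?evalB -?evalD;
    apply: eval_distinctness_neq0; rewrite !mem_cat.
    by rewrite (map_f (fun p : lform * lform => fsub p.1 p.2) pP) !orbT.
  by rewrite (map_f (fun p : lform * lform => fadd p.1 p.2) pP) !orbT.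
- apply/allP => _ /mapP[f /bad fbad ->]; move: fbad.
  by rewrite inE negb_or is_colour_zcol -zcol_eq0 => /andP[].
- apply/allP => _ /mapP[f /bad fbad ->]; move: fbad.
  by rewrite !inE !negb_or => /and4P[_ -> -> ->].
Qed.

Lemma walk_path steps fC : (steps, fC) \in walk_specs ->
  exists s, [/\ xy_path x y s, size s = 7%N, rainbow (zcol (eval ps cs fC) :: colours) x s
              & all (fun v => v \notin X) (interior x s)].
Proof.
move=> spec; have /allP/(_ _ spec)/and3P[/eqP size7 /eqP lastY permC] := walk_specs_ok.
have [stepsD stepsI fCcol] : [/\ {subset vertex_diffs steps <= distinctness_forms},
    {subset take 6 (walk steps) <= interior_forms} & zcol (eval ps cs fC) \in [:: c1; c2]].
  move: spec; rewrite !inE => /orP[]/eqP[-> ->].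
    by rewrite zcol_eval_fC1 eqxx; split=> // f fin; rewrite !mem_cat fin.
  by rewrite zcol_eval_fC2 eqxx orbT; split=> // f fin; rewrite !mem_cat fin ?orbT.
have [uC _ avoidC] := colours_spec.
exists (map (eval ps cs) (walk steps)); split.
- rewrite /xy_path -(eval_fX ps) last_map lastY eval_fY eqxx andbT -map_cons.
  apply: uniq_map_pairs; apply/allP => p pP; rewrite -subr_eq0 -evalB.
  by apply/eval_distinctness_neq0/stepsD/(map_f (fun p : lform * lform => fsub p.1 p.2) pP).
- by rewrite size_map size_scanl.
- rewrite /walk eval_scanl eval_fX; apply: rainbow_scanl.
    have -> : [seq zcol d | d <- map (eval ps cs) steps] =
              [seq zcol (eval ps cs f) | f <- map unsign steps].
      by rewrite -!map_comp; apply: eq_map => f /=; rewrite zcol_eval_unsign.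
    by move/(perm_map (fun f => zcol (eval ps cs f))): permC.
  rewrite cons_uniq uC andbT; apply/negP => /(allP avoidC).
  by move: fCcol; rewrite !inE => /orP[]/eqP->; rewrite eqxx ?andbF.
- rewrite /interior size_map size_scanl size7 -map_take all_map.
  by apply/allP => f /stepsI; case: good => _ nX _ /nX.
Qed.

Lemma rainbow_walks ci : ci \in [:: c1; c2] ->
  exists s, [/\ xy_path x y s, size s = 7%N, rainbow (ci :: colours) x s
              & all (fun v => v \notin X) (interior x s)].
Proof.
rewrite !inE => /orP[]/eqP->.
  by rewrite -zcol_eval_fC1; apply: (@walk_path steps1); rewrite mem_head.
by rewrite -zcol_eval_fC2; apply: (@walk_path steps2); rewrite !inE eqxx orbT.
Qed.

End GoodParams.

End Construction.

Theorem lemma5p2 : exists N : nat, forall n : nat, N <= n ->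
  forall (x y : vert n) (c1 c2 : nat) (X : {set vert n}) (C : seq nat),
    x != y ->
    is_colour n c1 -> is_colour n c2 -> c1 != c2 ->
    all (is_colour n) C ->
    #|X| * 25 <= n ->
    size (undup C) * 25 <= n ->
    exists C' : seq nat,
      [/\ uniq C', size C' = 6,
          all (is_colour n) C',
          all (fun c => (c \notin C) && (c != c1) && (c != c2)) C' &
          forall ci, ci \in [:: c1; c2] ->
            exists s : seq (vert n),
              [/\ xy_path x y s, size s = 7,
                  rainbow (ci :: C') x s &
                  all (fun v => v \notin X) (interior x s)]].
Proof.
exists 200 => n n_large x y c1 c2 X C xy c1col c2col _ _ X_small C_small.
have [ps good] : exists ps, good_params x y c1 c2 X C ps.
  by apply: exists_good_params; lia.
have [uC colC avoidC] := colours_spec good xy c1col c2col.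
exists (colours x y c1 c2 ps); split=> //.
exact: rainbow_walks good xy c1col c2col.
Qed.
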